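(* A family $\{\Theta_n\}_{n\ge0}$ of lattice congruences ($\Theta_n$ on the weak order $S_n$) is translational if and only if it has the form $\{\mathrm{Tr}(C)_n\}_{n\ge0}$ for some set $C$ of untranslated join-irreducible permutations of various sizes.
   Context: $S_n$: permutations of $[n]$ in one-line notation with the right weak order (inclusion of sets of inverted value pairs), a lattice. Join-irreducibles are the permutations with exactly one descent; $\gamma_*$ is the unique element covered by $\gamma$, and a congruence contracts $\gamma$ if $\gamma\equiv\gamma_*$. For $u\in S_p,v\in S_q$, $u\times v=u_1\cdots u_p(p+v_1)\cdots(p+v_q)\in S_{p+q}$; $1_k$ is the identity of $S_k$. $x\in S_n$ is a translate of $y\in S_k$ if $x=1_p\times y\times1_q$ for some $p,q\ge0$; $x$ is untranslated if $x_1>1$ and $x_n<n$. The family is translational if for all $p,q\ge0$, $u,u'\in S_p$, $v,v'\in S_q$: $u\times v\equiv u'\times v'$ mod $\Theta_{p+q}$ iff $u\equiv u'$ mod $\Theta_p$ and $v\equiv v'$ mod $\Theta_q$. For a set $C$ of untranslated join-irreducibles, $\mathrm{Tr}(C)_n$ is the smallest congruence on $S_n$ contracting every join-irreducible of $S_n$ that is a translate of some element of $C$. *)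

From mathcomp Require Import all_boot all_order all_fingroup.
Set Implicit Arguments. Unset Strict Implicit. Unset Printing Implicit Defensive.

Local Open Scope group_scope.

(* Permutations of [n] are 'S_n = {perm 'I_n}; in one-line notation w_i = w i
   (0-indexed values). *)

(* Inversion set: pairs of values (a,b), a < b, with b appearing before a. *)
Definition inv_set n (w : 'S_n) : {set 'I_n * 'I_n} :=
  [set ab : ('I_n * 'I_n)%type | (ab.1 < ab.2)%N && ((w^-1) ab.2 < (w^-1) ab.1)%N].

Definition weak_le n (u w : 'S_n) : bool := inv_set u \subset inv_set w.
Definition weak_lt n (u w : 'S_n) : bool := (u != w) && weak_le u w.

Definition is_join n (x y j : 'S_n) : Prop :=
  [/\ weak_le x j, weak_le y j &
      forall z, weak_le x z -> weak_le y z -> weak_le j z].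
Definition is_meet n (x y m : 'S_n) : Prop :=
  [/\ weak_le m x, weak_le m y &
      forall z, weak_le z x -> weak_le z y -> weak_le z m].

Definition lattice_congruence n (R : 'S_n -> 'S_n -> Prop) : Prop :=
  [/\ (forall x, R x x),
      (forall x y, R x y -> R y x),
      (forall x y z, R x y -> R y z -> R x z),
      (forall x y z jx jy, R x y -> is_join x z jx -> is_join y z jy -> R jx jy) &
      (forall x y z mx my, R x y -> is_meet x z mx -> is_meet y z my -> R mx my)].

Definition covers n (u w : 'S_n) : bool :=
  weak_lt u w && [forall z, ~~ (weak_lt u z && weak_lt z w)].
Definition join_irreducible n (w : 'S_n) : bool :=
  #|[set u | covers u w]| == 1%N.

(* R contracts gamma: gamma == gamma_* (the unique element covered by gamma). *)
Definition contracts n (R : 'S_n -> 'S_n -> Prop) (g : 'S_n) : Prop :=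
  exists g0, covers g0 g /\ R g0 g.

Definition pcat_fun p q (u : 'S_p) (v : 'S_q) (i : 'I_(p + q)) : 'I_(p + q) :=
  unsplit (match split i with inl j => inl (u j) | inr k => inr (v k) end).

Lemma pcat_fun_inj p q (u : 'S_p) (v : 'S_q) : injective (pcat_fun u v).
Proof.
move=> i j /(can_inj (@unsplitK p q)).
case Ei: (split i) => [a|a]; case Ej: (split j) => [b|b] // [] /perm_inj E;
  by rewrite -(splitK i) -(splitK j) Ei Ej E.
Qed.

Definition pcat p q (u : 'S_p) (v : 'S_q) : 'S_(p + q) := perm (@pcat_fun_inj p q u v).

Definition translate_of n k (x : 'S_n) (y : 'S_k) : Prop :=
  exists p q (E : (p + k + q)%N = n),
    x = cast_perm E (pcat (pcat (1 : 'S_p) y) (1 : 'S_q)).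

(* Untranslated: x_1 > 1 and x_n < n (1-indexed). *)
Definition untranslated n (x : 'S_n) : bool :=
  [exists i : 'I_n, (val i == 0%N) && (val (x i) != 0%N)] &&
  [exists i : 'I_n, (val i == n.-1) && (val (x i) != n.-1)].

Definition translational (Theta : forall n, 'S_n -> 'S_n -> Prop) : Prop :=
  forall p q (u u' : 'S_p) (v v' : 'S_q),
    Theta (p + q)%N (pcat u v) (pcat u' v') <-> (Theta p u u' /\ Theta q v v').

(* Tr(C)_n: smallest congruence on S_n contracting every join-irreducible of S_n
   that is a translate of some element of C (C k is the part of C in S_k). *)
Definition Tr (C : forall k, {set 'S_k}) n (x y : 'S_n) : Prop :=
  forall R : 'S_n -> 'S_n -> Prop, lattice_congruence R ->
    (forall g : 'S_n, join_irreducible g ->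
       (exists k (c : 'S_k), c \in C k /\ translate_of g c) -> contracts R g) ->
    R x y.

(* Permutations are handled through their inversion relations: these are
   exactly the transitive and co-transitive relations on pairs a < b, w covers
   u iff the inversions of u are those of w minus a descent, and w is
   join-irreducible iff it has a single descent.

   Tr(C) is translational: taking the left or right part of a permutation of
   p + q is a lattice homomorphism (it has both adjoints), as are s |-> s x v
   and s |-> u x s; a contracted translate of an element of C is sent either to
   a contracted translate or to a trivial pair, so Tr(C) pulls back to itself.

   Conversely let C be the untranslated join-irreducibles contracted by a
   translational Theta. Each cover u <. w is labelled by a join-irreducible
   j <= w, made of the inversions of w between the values and the positions of
   the corresponding descent, with j \/ u = w and j /\ u = j_*. If Theta
   identifies u and w then it contracts j, hence the untranslated core of j,
   which thus lies in C; so Tr(C) contracts j and identifies u and w as well.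
   Descending along covers from the join of x and y gives Theta <= Tr(C). *)

From Stdlib Require Import Relation_Operators Operators_Properties.
From mathcomp Require Import all_boot all_order all_fingroup zify.
From mathcomp Require Import boolp.
Set Implicit Arguments. Unset Strict Implicit. Unset Printing Implicit Defensive.
Local Open Scope group_scope.

Lemma card_ord_lt n m : m <= n -> #|[pred i : 'I_n | i < m]| = m.
Proof.
move=> le_mn; rewrite -sum1_card.
rewrite (eq_bigl (fun i : 'I_n => xpredT i && (i < m))) //.
by rewrite (big_ord_narrow_cond (P := xpredT) le_mn) sum1_card card_ord.
Qed.

Section Inversions.
Variable n : nat.
Implicit Types u w z : 'S_n.

(* Positions and values are naturals, out-of-range values being fixed: this
   makes shifting by a translation offset painless. *)
Definition pos w (x : nat) : nat :=
  if (insub x : option 'I_n) is Some i then val (w^-1 i) else x.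

Lemma posE w (i : 'I_n) : pos w i = w^-1 i.
Proof. by rewrite /pos valK. Qed.

Lemma pos_out w x : n <= x -> pos w x = x.
Proof. by move=> h; rewrite /pos insubF // ltnNge h. Qed.

Lemma pos_lt w x : x < n -> pos w x < n.
Proof. by move=> h; rewrite (_ : x = Ordinal h) // posE. Qed.

Lemma pos_inj w x y : x < n -> y < n -> pos w x = pos w y -> x = y.
Proof.
move=> hx hy; rewrite (_ : x = Ordinal hx) // (_ : y = Ordinal hy) // !posE.
by move/val_inj/perm_inj => ->.
Qed.

Lemma pos_perm w (i : 'I_n) : pos w (w i) = i.
Proof. by rewrite posE permK. Qed.

Lemma pos_onto w m : m < n -> exists2 z, z < n & pos w z = m.
Proof. by move=> h; exists (w (Ordinal h)) => //; rewrite pos_perm. Qed.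

Definition inverted w a b := [&& a < b, b < n & pos w b < pos w a].

Lemma inverted_lt w a b : inverted w a b -> a < b. Proof. by case/and3P. Qed.
Lemma inverted_bound w a b : inverted w a b -> b < n. Proof. by case/and3P. Qed.
Lemma inverted_pos w a b : inverted w a b -> pos w b < pos w a. Proof. by case/and3P. Qed.

Lemma in_inv_set w (a b : 'I_n) : ((a, b) \in inv_set w) = inverted w a b.
Proof. by rewrite inE /= /inverted -!posE ltn_ord. Qed.

(* Exactly the inversion relations of permutations of [n]
   (see [inversion_rel_inverted] and [inverted_perm_of_rel]). *)
Definition inversion_rel (I : nat -> nat -> bool) :=
  [/\ forall a b, I a b -> (a < b) && (b < n),
      forall a b c, I a b -> I b c -> I a c &
      forall a b c, a < b -> b < c -> I a c -> I a b || I b c].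

Lemma inversion_rel_inverted w : inversion_rel (inverted w).
Proof.
split.
- by move=> a b /and3P[-> -> _].
- move=> a b c /and3P[ab bn pba] /and3P[bc cn pcb].
  by rewrite /inverted (ltn_trans ab bc) cn (ltn_trans pcb pba).
- move=> a b c ab bc /and3P[ac cn pca].
  have bn : b < n by apply: ltn_trans cn.
  rewrite /inverted ab bc bn cn /=.
  case: (ltngtP (pos w b) (pos w a)) => //= h; first exact: ltn_trans pca h.
  by move/(pos_inj bn (ltn_trans ab bn)): h => E; rewrite E ltnn in ab.
Qed.

(* [precedes I s t]: in the permutation with inversion relation I, the value s
   comes before the value t. *)
Definition precedes (I : nat -> nat -> bool) (s t : nat) :=
  if s < t then ~~ I s t else I t s.

Lemma pos_card w v : v < n -> pos w v = #|[pred u : 'I_n | precedes (inverted w) u v]|.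
Proof.
move=> vn.
have -> : #|[pred u : 'I_n | precedes (inverted w) u v]| =
          #|(w^-1) @^-1: [set i : 'I_n | i < pos w v]|.
  apply: eq_card => u; rewrite !inE /precedes /inverted.
  case: (ltngtP u v) => [uv|vu|uv] /=.
  + rewrite vn /= -leqNgt leq_eqVlt posE.
    case: eqP => //= E; rewrite -posE in E.
    by have F := pos_inj (ltn_ord u) vn E; rewrite F ltnn in uv.
  + by rewrite ltn_ord posE.
  + by rewrite -posE uv ltnn.
rewrite card_preimset ?cardsE ?card_ord_lt //; last exact: perm_inj.
exact/ltnW/pos_lt.
Qed.

Lemma inverted_inj u w : inverted u =2 inverted w -> u = w.
Proof.
move=> E; apply: invg_inj; apply/permP => i; apply: ord_inj.
rewrite -!posE !pos_card //; apply: eq_card => x.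
by rewrite !unfold_in /= /precedes !E.
Qed.

Lemma weak_leP u w : reflect (forall a b, inverted u a b -> inverted w a b) (weak_le u w).
Proof.
apply: (iffP subsetP) => H.
- move=> a b hab; have bn := inverted_bound hab.
  have an := ltn_trans (inverted_lt hab) bn.
  by move: (H (Ordinal an, Ordinal bn)); rewrite !in_inv_set; apply.
- by case=> a b; rewrite !in_inv_set; apply: H.
Qed.

Lemma weak_le_inverted u w a b : weak_le u w -> inverted u a b -> inverted w a b.
Proof. by move/weak_leP; apply. Qed.

Lemma weak_le_refl w : weak_le w w. Proof. exact: subxx. Qed.

Lemma weak_le_trans u w z : weak_le u w -> weak_le w z -> weak_le u z.
Proof. exact: subset_trans. Qed.

Lemma weak_le_anti u w : weak_le u w -> weak_le w u -> u = w.
Proof.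
move=> /weak_leP h1 /weak_leP h2; apply: inverted_inj => a b.
by apply/idP/idP; [apply: h1 | apply: h2].
Qed.

Lemma pos1 x : pos 1 x = x.
Proof.
case: (ltnP x n) => xn; last by rewrite pos_out.
by rewrite (_ : x = Ordinal xn) // posE invg1 perm1.
Qed.

Lemma inverted1 a b : inverted 1 a b = false.
Proof. by rewrite /inverted !pos1; case: ltngtP => // ab; rewrite andbF. Qed.

End Inversions.

Section PermOfRel.
Variables (n : nat) (I : nat -> nat -> bool).
Hypothesis invI : inversion_rel n I.

Let I_lt a b : I a b -> a < b. Proof. by case: invI => h _ _ /h /andP[]. Qed.
Let I_trans a b c : I a b -> I b c -> I a c. Proof. by case: invI => _ h _; apply: h. Qed.
Let I_cotrans a b c : a < b -> b < c -> I a c -> I a b || I b c.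
Proof. by case: invI => _ _ h; apply: h. Qed.

Lemma precedes_irr a : precedes I a a = false.
Proof. by rewrite /precedes ltnn; apply/negP => /I_lt; rewrite ltnn. Qed.

Lemma precedes_total a b : a != b -> precedes I a b || precedes I b a.
Proof. by rewrite /precedes; case: ltngtP => // _ _; case: (I _ _). Qed.

Lemma precedes_trans a b c : precedes I a b -> precedes I b c -> precedes I a c.
Proof.
rewrite /precedes.
case: (ltngtP a b) => ab; case: (ltngtP b c) => bc; case: (ltngtP a c) => ac /=
  => h1 h2; try (exfalso; lia).
all: try (by move: h1 => /I_lt; lia); try (by move: h2 => /I_lt; lia).
- apply/negP => Iac; have := I_cotrans ab bc Iac; by rewrite (negbTE h1) (negbTE h2).
- apply/negP => Iac; by rewrite (I_trans Iac h2) in h1.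
- have := I_cotrans ac ab h2; by rewrite (negbTE h1) orbF.
- by subst; rewrite h2 in h1.
- apply/negP => Iac; by rewrite (I_trans h1 Iac) in h2.
- have := I_cotrans bc ac h1; by rewrite (negbTE h2).
- by subst; rewrite h1 in h2.
- exact: I_trans h2 h1.
Qed.

Definition predecessors (v : nat) := [pred u : 'I_n | precedes I u v].

Lemma card_predecessors_lt (x y : 'I_n) :
  precedes I x y -> #|predecessors x| < #|predecessors y|.
Proof.
move=> xy; apply: proper_card; apply/properP; split.
- by apply/subsetP => z; rewrite !inE => zx; apply: precedes_trans zx xy.
- by exists x; rewrite !inE ?precedes_irr.
Qed.

Lemma card_predecessors_bound (v : 'I_n) : #|predecessors v| < n.
Proof.
rewrite -[X in _ < X]card_ord; apply: proper_card; apply/properP.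
by split; [apply/subsetP | exists v; rewrite ?inE ?precedes_irr].
Qed.

End PermOfRel.

(* The position of v is its number of predecessors; the [insubd]s only matter
   when I is not an inversion relation. *)
Definition rank_of_rel n (I : nat -> nat -> bool) : {ffun 'I_n -> 'I_n} :=
  [ffun v : 'I_n => insubd v #|predecessors n I v|].

Definition perm_of_rel n (I : nat -> nat -> bool) : 'S_n :=
  (insubd (1 : 'S_n) (rank_of_rel n I))^-1.

Section PermOfRelTheory.
Variables (n : nat) (I : nat -> nat -> bool).
Hypothesis invI : inversion_rel n I.

Lemma pos_perm_of_rel v : v < n -> pos (perm_of_rel n I) v = #|predecessors n I v|.
Proof.
set f := rank_of_rel n I.
have fE (u : 'I_n) : val (f u) = #|predecessors n I u|.
  by rewrite ffunE val_insubd card_predecessors_bound.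
have f_inj : injectiveb f.
  apply/injectiveP => x y /(congr1 val); rewrite !fE => E; apply/eqP/negP => /negP nxy.
  by case/orP: (precedes_total I nxy) => /(card_predecessors_lt invI); rewrite E ltnn.
move=> vn; rewrite (_ : v = Ordinal vn) // posE /perm_of_rel invgK -pvalE.
by rewrite -[pval _]/(val _) val_insubd f_inj fE.
Qed.

Lemma inverted_perm_of_rel : inverted (perm_of_rel n I) =2 I.
Proof.
have [I_bound _ _] := invI.
move=> a b; rewrite /inverted; case Iab: (I a b).
- have /andP[ab bn] := I_bound _ _ Iab; have an := ltn_trans ab bn.
  rewrite ab bn !pos_perm_of_rel // (_ : a = Ordinal an) // (_ : b = Ordinal bn) //.
  by apply: card_predecessors_lt => //; rewrite /precedes /= ltnNge (ltnW ab).
- case: (ltnP a b) => //= ab; case: (ltnP b n) => //= bn.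
  have an := ltn_trans ab bn.
  rewrite !pos_perm_of_rel // (_ : a = Ordinal an) // (_ : b = Ordinal bn) //.
  by rewrite ltnNge ltnW // card_predecessors_lt // /precedes /= ab Iab.
Qed.

End PermOfRelTheory.

Definition del_pair (I : nat -> nat -> bool) (x y a b : nat) :=
  I a b && ((a != x) || (b != y)).

Section Covers.
Variable n : nat.
Implicit Types u w z : 'S_n.

Definition descent w x y := inverted w x y && (pos w x == (pos w y).+1).

Definition del_descent w x y := perm_of_rel n (del_pair (inverted w) x y).

Lemma weak_lt_inversion u z : u != z -> weak_le u z ->
  exists a b, inverted z a b && ~~ inverted u a b.
Proof.
move=> ne le.
case: (boolP [exists a : 'I_n, exists b : 'I_n, inverted z a b && ~~ inverted u a b]).
  by case/existsP => a /existsP[b h]; exists a, b.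
rewrite negb_exists => /forallP none; case/eqP: ne; apply: weak_le_anti le _.
apply/weak_leP => a b zab; apply/negPn/negP => nu.
have bn := inverted_bound zab; have an := ltn_trans (inverted_lt zab) bn.
by have /existsPn/(_ (Ordinal bn)) := none (Ordinal an); rewrite zab nu.
Qed.

Lemma covers_del_pair u w x y : inverted w x y ->
  inverted u =2 del_pair (inverted w) x y -> covers u w.
Proof.
move=> wxy E.
have le : weak_le u w by apply/weak_leP => a b; rewrite E => /andP[].
have ne : u != w by apply/eqP => uw; have := E x y; rewrite /del_pair wxy !eqxx uw wxy.
rewrite /covers /weak_lt ne le /=; apply/forallP => z; apply/negP.
move=> /andP[/andP[uz luz] /andP[zw lzw]].
have [a [b /andP[za nua]]] := weak_lt_inversion uz luz.
have : ~~ del_pair (inverted w) x y a b by rewrite -E.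
rewrite /del_pair (weak_le_inverted lzw za) /= negb_or !negbK => /andP[/eqP ax /eqP bx].
subst a b; case/eqP: zw; apply: weak_le_anti lzw _; apply/weak_leP => c d wcd.
case: (boolP ((c != x) || (d != y))) => h.
- by apply: (weak_le_inverted luz); rewrite E /del_pair wcd h.
- by move: h; rewrite negb_or !negbK => /andP[/eqP -> /eqP ->].
Qed.

Lemma inversion_rel_del_descent w x y :
  descent w x y -> inversion_rel n (del_pair (inverted w) x y).
Proof.
case/andP=> wxy /eqP pxy.
have yn := inverted_bound wxy; have xy := inverted_lt wxy; have xn := ltn_trans xy yn.
have [w_bound w_trans w_cotrans] := inversion_rel_inverted w.
split.
- by move=> a b /andP[/w_bound].
- move=> a b c /andP[wab nab] /andP[wbc nbc]; rewrite /del_pair (w_trans _ _ _ wab wbc) /=.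
  case: (eqVneq a x) => [ax|//]; case: (eqVneq c y) => [cy|//]; subst a c; exfalso.
  by have := inverted_pos wab; have := inverted_pos wbc; lia.
- move=> a b c ab bc /andP[wac nac]; rewrite /del_pair.
  have cn := inverted_bound wac; have bn := ltn_trans bc cn; have an := ltn_trans ab bn.
  have pca := inverted_pos wac.
  case/orP: (w_cotrans _ _ _ ab bc wac) => h.
  + case: (boolP ((a != x) || (b != y))) => hab; first by rewrite h.
    move: hab; rewrite negb_or !negbK => /andP[/eqP ax /eqP bx]; subst a b.
    have ne : pos w c != pos w y.
      by apply/eqP => /(pos_inj cn yn) E; subst c; rewrite ltnn in bc.
    have wyc : inverted w y c by rewrite /inverted bc cn /=; lia.
    by rewrite wyc andbF /=; apply/orP; left; apply/eqP => E; rewrite E ltnn in xy.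
  + case: (boolP ((b != x) || (c != y))) => hbc; first by rewrite h orbT.
    move: hbc; rewrite negb_or !negbK => /andP[/eqP bx /eqP cy]; subst b c.
    have ne : pos w a != pos w x.
      by apply/eqP => /(pos_inj an xn) E; subst a; rewrite ltnn in ab.
    have wax : inverted w a x by rewrite /inverted ab xn /=; lia.
    by rewrite wax andbF orbF /=; apply/orP; left; apply/eqP => E; rewrite E ltnn in ab.
Qed.

Lemma inverted_del_descent w x y :
  descent w x y -> inverted (del_descent w x y) =2 del_pair (inverted w) x y.
Proof. by move/inversion_rel_del_descent/inverted_perm_of_rel. Qed.

Lemma covers_del_descent w x y : descent w x y -> covers (del_descent w x y) w.
Proof.
by move=> d; apply: (covers_del_pair (andP d).1); apply: inverted_del_descent.
Qed.

(* An inversion of w missing from u whose two values are closest in w is a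
   descent of w: a value between them would split it into two inversions
   that are closer, hence both in u or both out of w. *)
Lemma descent_of_closest_inversion u w x y : weak_le u w ->
  inverted w x y -> ~~ inverted u x y ->
  (forall a b, inverted w a b -> pos w a - pos w b < pos w x - pos w y -> inverted u a b) ->
  descent w x y.
Proof.
move=> le wxy uxy closest; rewrite /descent wxy /=.
have pyx := inverted_pos wxy; have xy := inverted_lt wxy.
have yn := inverted_bound wxy; have xn := ltn_trans xy yn.
have [_ u_trans u_cotrans] := inversion_rel_inverted u.
case: (ltnP (pos w y).+1 (pos w x)) => h; last by apply/eqP/anti_leq; rewrite h pyx.
have [z zn pz] := pos_onto w (ltn_trans h (pos_lt w xn)).
have zx : z != x by apply/eqP => E; subst z; rewrite pz ltnn in h.
have zy : z != y by apply/eqP => E; subst z; lia.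
have not_above a b : a < b -> b < n -> pos w a < pos w b -> ~~ inverted u a b.
  by move=> ab bn pab; apply/negP => /(weak_le_inverted le)/inverted_pos; lia.
case: (ltngtP x z) => xz; last by rewrite xz eqxx in zx.
- case: (ltngtP z y) => zy'; last by rewrite zy' eqxx in zy.
  + have h1 : inverted u x z by apply: closest; rewrite /inverted ?xz ?zn ?pz /=; lia.
    have h2 : inverted u z y by apply: closest; rewrite /inverted ?zy' ?yn ?pz /=; lia.
    by rewrite (u_trans _ _ _ h1 h2) in uxy.
  + have h1 : inverted u x z by apply: closest; rewrite /inverted ?xz ?zn ?pz /=; lia.
    have h2 : ~~ inverted u y z by apply: not_above => //; lia.
    by have := u_cotrans _ _ _ xy zy' h1; rewrite (negbTE uxy) (negbTE h2).
- have h1 : inverted u z y by apply: closest; rewrite /inverted ?yn ?pz /=; lia.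
  have h2 : ~~ inverted u z x by apply: not_above => //; lia.
  by have := u_cotrans _ _ _ xz xy h1; rewrite (negbTE uxy) (negbTE h2).
Qed.

Lemma exists_descent u w : weak_le u w -> u != w ->
  exists x y, descent w x y /\ ~~ inverted u x y.
Proof.
move=> le ne.
pose gap d := [exists x : 'I_n, exists y : 'I_n,
  [&& inverted w x y, ~~ inverted u x y & pos w x - pos w y == d]].
have gapP a b : inverted w a b -> ~~ inverted u a b -> gap (pos w a - pos w b).
  move=> wab uab; have bn := inverted_bound wab; have an := ltn_trans (inverted_lt wab) bn.
  apply/existsP; exists (Ordinal an); apply/existsP; exists (Ordinal bn).
  by rewrite wab uab eqxx.
have [a0 [b0 /andP[w0 u0]]] := weak_lt_inversion ne le.
case: (ex_minnP (ex_intro gap _ (gapP _ _ w0 u0))).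
move=> d /existsP[x /existsP[y /and3P[wxy uxy /eqP dxy]]] mind.
exists x, y; split => //; apply: descent_of_closest_inversion le wxy uxy _.
move=> a b wab; rewrite dxy => close; apply/negPn/negP => uab.
by have := mind _ (gapP _ _ wab uab); rewrite leqNgt close.
Qed.

Lemma coversP u w :
  covers u w <-> exists x y, descent w x y /\ u = del_descent w x y.
Proof.
split; last by case=> x [y [d ->]]; apply: covers_del_descent.
case/andP => /andP[ne le] /forallP nz.
have [x [y [d nu]]] := exists_descent le ne.
exists x, y; split => //.
have le1 : weak_le u (del_descent w x y).
  apply/weak_leP => a b h; rewrite inverted_del_descent // /del_pair.
  rewrite (weak_le_inverted le h) /=.
  case: (eqVneq a x) => [ax|//]; case: (eqVneq b y) => [bx|//]; subst a b.
  by rewrite h in nu.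
have /andP[lt2 _] := covers_del_descent d.
by have := nz (del_descent w x y); rewrite lt2 andbT /weak_lt le1 andbT negbK => /eqP.
Qed.

Lemma del_descent_inj w x y x' y' : descent w x y -> descent w x' y' ->
  del_descent w x y = del_descent w x' y' -> x = x' /\ y = y'.
Proof.
move=> d d' /(congr1 (fun v => inverted v x y)).
rewrite !inverted_del_descent // /del_pair (andP d).1 !eqxx /=.
by case: (eqVneq x x') => [->|]; case: (eqVneq y y') => [->|].
Qed.

Lemma join_irreducibleP w : join_irreducible w <->
  exists x y, descent w x y /\ forall x' y', descent w x' y' -> x' = x /\ y' = y.
Proof.
split.
- move=> /cards1P [u0 E].
  have : u0 \in [set u | covers u w] by rewrite E inE.
  rewrite inE => /coversP [x [y [d Eu]]].
  exists x, y; split => // x' y' d'.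
  have : del_descent w x' y' \in [set u | covers u w] by rewrite inE (covers_del_descent d').
  by rewrite E inE Eu => /eqP/(del_descent_inj d' d).
- move=> [x [y [d U]]]; apply/cards1P; exists (del_descent w x y).
  apply/setP => u; rewrite !inE; apply/idP/eqP; last by move=> ->; apply: covers_del_descent.
  by move/coversP => [x' [y' [d' ->]]]; case: (U _ _ d') => -> ->.
Qed.

Lemma covers_uniq w u u' : join_irreducible w -> covers u w -> covers u' w -> u = u'.
Proof.
move=> /cards1P [u0 E] c c'.
have : u \in [set u | covers u w] by rewrite inE.
have : u' \in [set u | covers u w] by rewrite inE.
by rewrite E !inE => /eqP -> /eqP ->.
Qed.

Lemma join_irreducible_covers w : join_irreducible w -> exists u, covers u w.
Proof.
move=> /cards1P [u0 E]; exists u0.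
have : u0 \in [set u | covers u w] by rewrite E inE.
by rewrite inE.
Qed.

End Covers.

Section Concatenation.
Variables p q : nat.
Implicit Types (u : 'S_p) (v : 'S_q).

Lemma pcat_lshift u v (j : 'I_p) : pcat u v (lshift q j) = lshift q (u j).
Proof. by rewrite permE /pcat_fun (unsplitK (inl j)). Qed.

Lemma pcat_rshift u v (k : 'I_q) : pcat u v (rshift p k) = rshift p (v k).
Proof. by rewrite permE /pcat_fun (unsplitK (inr k)). Qed.

Lemma pcatV u v : (pcat u v)^-1 = pcat u^-1 v^-1.
Proof.
apply/permP => x; apply: (@perm_inj _ (pcat u v)); rewrite permKV.
rewrite -(splitK x); case: (split x) => j /=.
- by rewrite !pcat_lshift permKV.
- by rewrite !pcat_rshift permKV.
Qed.

Lemma pos_pcat u v x : pos (pcat u v) x =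
  if x < p then pos u x else if x < p + q then p + pos v (x - p) else x.
Proof.
case: (ltnP x p) => xp.
  have {1}-> : x = lshift q (Ordinal xp) by [].
  by rewrite posE pcatV pcat_lshift /= -(posE u (Ordinal xp)).
case: (ltnP x (p + q)) => xpq; last by rewrite pos_out.
have xq : x - p < q by lia.
have {1}-> : x = rshift p (Ordinal xq) by rewrite /= subnKC.
by rewrite posE pcatV pcat_rshift /= -(posE v (Ordinal xq)).
Qed.

Lemma inverted_pcat u v a b : inverted (pcat u v) a b =
  if b < p then inverted u a b else (p <= a) && inverted v (a - p) (b - p).
Proof.
rewrite /inverted !pos_pcat.
have pu x : x < p -> pos u x < p := @pos_lt _ u x.
case: (ltnP b p) => bp; case: (ltnP a p) => ap; case: (ltnP b (p + q)) => bq;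
  case: (ltnP a b) => ab /=; try (exfalso; lia); try done.
- by apply/negbTE; rewrite -leqNgt (leq_trans (ltnW (pu _ ap)) (leq_addr _ _)).
- rewrite (ltn_trans ab bq) ltn_add2l (ltn_sub2r (leq_ltn_trans ap ab) ab).
  by rewrite (_ : b - p < q) // ltn_subLR.
all: by symmetry; apply/negbTE/negP => /and3P[h1 h2 _]; clear pu; lia.
Qed.

End Concatenation.

Section Cast.
Variables (m n : nat) (E : m = n).

Lemma inverted_cast (w : 'S_m) : inverted (cast_perm E w) =2 inverted w.
Proof. by case: n / E; rewrite cast_perm_id. Qed.

Lemma descent_cast (w : 'S_m) x y : descent (cast_perm E w) x y = descent w x y.
Proof. by case: n / E; rewrite cast_perm_id. Qed.

Lemma covers_cast (u w : 'S_m) : covers (cast_perm E u) (cast_perm E w) = covers u w.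
Proof. by case: n / E; rewrite !cast_perm_id. Qed.

Lemma join_irreducible_cast (w : 'S_m) :
  join_irreducible (cast_perm E w) = join_irreducible w.
Proof. by case: n / E; rewrite cast_perm_id. Qed.

End Cast.

Definition pad a b k (c : 'S_k) : 'S_(a + k + b) := pcat (pcat (1 : 'S_a) c) (1 : 'S_b).

Section Pad.
Variables a k b : nat.
Implicit Type c : 'S_k.

Lemma inverted_pad c x y : inverted (pad a b c) x y = (a <= x) && inverted c (x - a) (y - a).
Proof.
rewrite /pad inverted_pcat inverted1 andbF inverted_pcat inverted1.
case: (ltnP y (a + k)) => yak; case: (ltnP y a) => ya //=.
all: by symmetry; apply/negbTE/negP => /andP[_ /and3P[]]; lia.
Qed.

Lemma pos_pad c x : pos (pad a b c) x =
  if x < a then x else if x < a + k then a + pos c (x - a) else x.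
Proof.
rewrite /pad pos_pcat pos1 pos_pcat pos1.
case: (ltnP x (a + k)) => xak; case: (ltnP x a) => xa //=.
all: by case: ifP => _ //; rewrite subnKC.
Qed.

Lemma descent_pad c x y : descent (pad a b c) x y = (a <= x) && descent c (x - a) (y - a).
Proof.
rewrite /descent inverted_pad.
case: (boolP (a <= x)) => ax //=; case: (boolP (inverted c (x - a) (y - a))) => h //=.
have := inverted_lt h; have := inverted_bound h => h1 h2.
have [xa ya] : (x < a = false) /\ (y < a = false) by split; apply/negbTE; lia.
have [xak yak] : x < a + k /\ y < a + k by split; lia.
by rewrite !pos_pad xa ya xak yak; apply/eqP/eqP; lia.
Qed.

Lemma join_irreducible_pad c : join_irreducible (pad a b c) <-> join_irreducible c.
Proof.
rewrite !join_irreducibleP; split.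
- move=> [x [y [d U]]]; move: d; rewrite descent_pad => /andP[ax d].
  exists (x - a), (y - a); split => // x' y' d'.
  have : descent (pad a b c) (x' + a) (y' + a) by rewrite descent_pad leq_addl !addnK.
  by move/U => [<- <-]; rewrite !addnK.
- move=> [x [y [d U]]]; exists (x + a), (y + a).
  split; first by rewrite descent_pad leq_addl !addnK.
  move=> x' y' d'; have := d'; rewrite descent_pad => /andP[ax /U [E1 E2]].
  by have := inverted_lt (andP d').1; split; lia.
Qed.

Lemma covers_pad c0 c : covers c0 c -> covers (pad a b c0) (pad a b c).
Proof.
case/coversP => x [y [d ->]].
apply: (@covers_del_pair _ _ _ (a + x) (a + y)).
  by rewrite inverted_pad leq_addr !addKn (andP d).1.
move=> s t; rewrite /del_pair !inverted_pad inverted_del_descent // /del_pair.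
case: (boolP (a <= s)) => //= ass; case: (boolP (inverted c (s - a) (t - a))) => //= h.
have := inverted_lt h => st.
by congr (~~ _ || ~~ _); apply/eqP/eqP; lia.
Qed.

End Pad.

Definition translated_at n k (h : 'S_n) a (c : 'S_k) :=
  forall s t, inverted h s t = (a <= s) && inverted c (s - a) (t - a).

Section Translates.
Variables n k : nat.
Implicit Types (h : 'S_n) (c : 'S_k).

Lemma translated_at_pad h a c (E : a + k + (n - (a + k)) = n) :
  translated_at h a c -> h = cast_perm E (pad a (n - (a + k)) c).
Proof. by move=> tr; apply: inverted_inj => s t; rewrite inverted_cast inverted_pad. Qed.

Lemma translate_ofP h c : translate_of h c <-> exists2 a, a + k <= n & translated_at h a c.
Proof.
split.
- case=> a [b [E ->]]; exists a; first by rewrite -E leq_addr.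
  by move=> s t; rewrite inverted_cast inverted_pad.
- case=> a le tr; have E : a + k + (n - (a + k)) = n by rewrite subnKC.
  by exists a, (n - (a + k)), E; apply: translated_at_pad.
Qed.

Lemma translate_of_ji h c : translate_of h c -> join_irreducible h <-> join_irreducible c.
Proof. by case=> a [b [E ->]]; rewrite join_irreducible_cast join_irreducible_pad. Qed.

Lemma untranslated_of_ends c : inverted c 0 k.-1 -> untranslated c.
Proof.
move=> h; have k1 : k.-1 < k := inverted_bound h; have k0 : 0 < k by lia.
rewrite /untranslated; apply/andP; split; apply/existsP.
- exists (Ordinal k0); rewrite /= ?eqxx /=; apply/eqP => E.
  have := pos_perm c (Ordinal k0); rewrite E /= => c0.
  by have := inverted_pos h; rewrite c0.
- exists (Ordinal k1); rewrite /= ?eqxx /=; apply/eqP => E.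
  have := pos_perm c (Ordinal k1); rewrite E /= => c1.
  by have := inverted_pos h; have := pos_lt c k0; rewrite c1; lia.
Qed.

Lemma untranslated_descents c : untranslated c ->
  (exists t, descent c 0 t) /\ (exists s, descent c s k.-1).
Proof.
case/andP => /existsP [i /andP[/eqP i0 ci]] /existsP [j /andP[/eqP jk cj]].
have k0 : 0 < k by have := ltn_ord i; lia.
have k1 : k.-1 < k by lia.
split.
- have pv := pos_perm c i; rewrite i0 in pv.
  have p0 : pos c 0 != 0.
    apply/eqP => E; have F := pos_inj (ltn_ord (c i)) k0 (etrans pv (esym E)).
    exact: (negP ci (introT eqP F)).
  have [t tk pt] : exists2 t, t < k & pos c t = (pos c 0).-1.
    by apply: pos_onto; have := pos_lt c k0; lia.
  have t0 : t != 0 by apply/eqP => E; subst t; move: pt p0; lia.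
  exists t; rewrite /descent /inverted pt tk.
  by apply/andP; split; [apply/and3P; split => //|apply/eqP]; lia.
- have pv := pos_perm c j; rewrite jk in pv.
  have p1 : pos c k.-1 != k.-1.
    apply/eqP => E; have F := pos_inj (ltn_ord (c j)) k1 (etrans pv (esym E)).
    exact: (negP cj (introT eqP F)).
  have [s sk ps] : exists2 s, s < k & pos c s = (pos c k.-1).+1.
    by apply: pos_onto; have := pos_lt c k1; lia.
  have s1 : s != k.-1 by apply/eqP => E; subst s; move: ps; lia.
  exists s; rewrite /descent /inverted ps k1.
  by apply/andP; split; [apply/and3P; split => //|apply/eqP]; lia.
Qed.

Lemma untranslated_ji_descent c : untranslated c -> join_irreducible c ->
  descent c 0 k.-1 /\ (forall x y, descent c x y -> x = 0 /\ y = k.-1).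
Proof.
move=> ut /join_irreducibleP [x [y [d U]]].
have [[t /U [-> _]] [s /U [_ ->]]] := untranslated_descents ut.
by split => // x' y' /U.
Qed.

Lemma translated_descent h a c : untranslated c -> join_irreducible c ->
  a + k <= n -> translated_at h a c ->
  descent h a (a + k.-1) /\ (forall x y, descent h x y -> x = a /\ y = a + k.-1).
Proof.
move=> ut ji le tr; have [d U] := untranslated_ji_descent ut ji.
rewrite (translated_at_pad (subnKC le) tr); split.
  by rewrite descent_cast descent_pad leqnn subnn addKn.
move=> x y; rewrite descent_cast descent_pad => /andP[ax dd].
by have := inverted_lt (andP dd).1; case: (U _ _ dd); split; lia.
Qed.

End Translates.

Section LatticeBasics.
Variable n : nat.
Implicit Types x y z : 'S_n.

Lemma weak_le1 x : weak_le 1 x.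
Proof. by apply/weak_leP => a b; rewrite inverted1. Qed.

Lemma is_join_le x y : weak_le x y -> is_join x y y.
Proof. by split; [done | apply: weak_le_refl | move=> z _]. Qed.

Lemma is_join_sym x y j : is_join x y j -> is_join y x j.
Proof. by case=> h1 h2 h3; split => // z a b; apply: h3. Qed.

Lemma is_meet_le x y : weak_le x y -> is_meet x y x.
Proof. by split; [apply: weak_le_refl | done | move=> z]. Qed.

Lemma is_meet_sym x y m : is_meet x y m -> is_meet y x m.
Proof. by case=> h1 h2 h3; split => // z a b; apply: h3. Qed.

End LatticeBasics.

Section Adjoints.
Variables (m n : nat) (f : 'S_m -> 'S_n).

Lemma is_join_upper_adjoint (g : 'S_n -> 'S_m) :
  (forall x s, weak_le (f x) s = weak_le x (g s)) ->
  forall x y j, is_join x y j -> is_join (f x) (f y) (f j).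
Proof.
move=> adj x y j [xj yj least].
have mono a b : weak_le a b -> weak_le (f a) (f b).
  by move=> ab; rewrite adj (weak_le_trans ab) // -adj weak_le_refl.
split; try exact: mono.
by move=> s; rewrite !adj => xs ys; apply: least.
Qed.

Lemma is_meet_lower_adjoint (h : 'S_n -> 'S_m) :
  (forall s x, weak_le (h s) x = weak_le s (f x)) ->
  forall x y m, is_meet x y m -> is_meet (f x) (f y) (f m).
Proof.
move=> adj x y mxy [mx my great].
have mono a b : weak_le a b -> weak_le (f a) (f b).
  by move=> ab; rewrite -adj (weak_le_trans _ ab) // adj weak_le_refl.
split; try exact: mono.
by move=> s; rewrite -!adj => sx sy; apply: great.
Qed.

End Adjoints.

Section Parts.
Variables p q : nat.
Implicit Types (w x : 'S_(p + q)) (s : 'S_p) (t : 'S_q).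

Definition left_part w : 'S_p := perm_of_rel p (fun a b => (b < p) && inverted w a b).
Definition right_part w : 'S_q := perm_of_rel q (fun a b => inverted w (p + a) (p + b)).

Lemma inverted_left_part w a b : inverted (left_part w) a b = (b < p) && inverted w a b.
Proof.
apply: inverted_perm_of_rel; have [w_bound w_trans w_cotrans] := inversion_rel_inverted w.
split.
- by move=> {}a {}b /andP[-> /inverted_lt ->].
- by move=> {}a {}b c /andP[_ h1] /andP[cp h2]; rewrite cp (w_trans _ _ _ h1 h2).
- move=> {}a {}b c ab bc /andP[cp h]; rewrite cp (ltn_trans bc cp); exact: w_cotrans.
Qed.

Lemma inverted_right_part w a b : inverted (right_part w) a b = inverted w (p + a) (p + b).
Proof.
apply: inverted_perm_of_rel; have [w_bound w_trans w_cotrans] := inversion_rel_inverted w.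
split.
- by move=> {}a {}b /w_bound; lia.
- by move=> {}a {}b c; apply: w_trans.
- by move=> {}a {}b c ab bc; apply: w_cotrans; lia.
Qed.

Lemma left_part_pcat s t : left_part (pcat s t) = s.
Proof.
apply: inverted_inj => a b; rewrite inverted_left_part inverted_pcat.
by case: (ltnP b p) => //= bp; apply/esym/negbTE/negP => /inverted_bound; lia.
Qed.

Lemma right_part_pcat s t : right_part (pcat s t) = t.
Proof.
apply: inverted_inj => a b; rewrite inverted_right_part inverted_pcat.
by rewrite ltnNge leq_addr /= leq_addr /= !addKn.
Qed.

Lemma left_part_mono w x : weak_le w x -> weak_le (left_part w) (left_part x).
Proof.
move=> le; apply/weak_leP => a b; rewrite !inverted_left_part.
by case/andP=> -> /(weak_le_inverted le).
Qed.

Lemma right_part_mono w x : weak_le w x -> weak_le (right_part w) (right_part x).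
Proof.
by move=> le; apply/weak_leP => a b; rewrite !inverted_right_part => /(weak_le_inverted le).
Qed.

(* The largest permutation with left part s. *)
Definition left_top s : 'S_(p + q) :=
  perm_of_rel (p + q) (fun a b => ((b < p) && inverted s a b) || [&& a < b, p <= b & b < p + q]).

Lemma inverted_left_top s a b : inverted (left_top s) a b =
  ((b < p) && inverted s a b) || [&& a < b, p <= b & b < p + q].
Proof.
apply: inverted_perm_of_rel; have [s_bound s_trans s_cotrans] := inversion_rel_inverted s.
split.
- move=> {}a {}b /orP[/andP[bp /s_bound] | /and3P[-> _ ->]] //; lia.
- move=> {}a {}b c /orP[/andP[bp h1] | /and3P[ab pb bpq]] /orP[/andP[cp h2] | /and3P[bc cp cpq]].
  + by rewrite cp (s_trans _ _ _ h1 h2).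
  + by rewrite cp cpq (ltn_trans (inverted_lt h1) bc) orbT.
  + by have := inverted_lt h2; lia.
  + by rewrite cp cpq (ltn_trans ab bc) orbT.
- move=> {}a {}b c ab bc /orP[/andP[cp h] | /and3P[ac cp cpq]].
  + by case/orP: (s_cotrans _ _ _ ab bc h) => ->; rewrite cp (ltn_trans bc cp) ?orbT.
  + case: (ltnP b p) => bp; first by rewrite bc cp cpq !orbT.
    by rewrite ab (ltn_trans bc cpq).
Qed.

Lemma left_part_left_top s : left_part (left_top s) = s.
Proof.
apply: inverted_inj => a b; rewrite inverted_left_part inverted_left_top.
case: (ltnP b p) => bp /=; first by rewrite andbF orbF.
by apply/esym/negbTE/negP => /inverted_bound; lia.
Qed.

Lemma left_part_adjoint w s : weak_le (left_part w) s = weak_le w (left_top s).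
Proof.
apply/idP/idP => le.
- apply/weak_leP => a b h; rewrite inverted_left_top.
  case: (ltnP b p) => bp /=; last by rewrite (inverted_lt h) (inverted_bound h) ?bp ?orbT.
  by rewrite (weak_le_inverted le) // inverted_left_part bp.
- by rewrite -(left_part_left_top s) left_part_mono.
Qed.

Lemma pcat1_adjoint s w : weak_le (pcat s 1) w = weak_le s (left_part w).
Proof.
apply/idP/idP => le; last first.
  apply/weak_leP => a b; rewrite inverted_pcat inverted1 andbF.
  by case: ifP => // bp /(weak_le_inverted le); rewrite inverted_left_part => /andP[].
by rewrite -(left_part_pcat s 1) left_part_mono.
Qed.

(* The largest permutation with right part t. *)
Definition right_top t : 'S_(p + q) :=
  perm_of_rel (p + q) (fun a b => ((p <= a) && inverted t (a - p) (b - p)) ||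
                                  [&& a < p, a < b & b < p + q]).

Lemma inverted_right_top t a b : inverted (right_top t) a b =
  ((p <= a) && inverted t (a - p) (b - p)) || [&& a < p, a < b & b < p + q].
Proof.
apply: inverted_perm_of_rel; have [t_bound t_trans t_cotrans] := inversion_rel_inverted t.
split.
- move=> {}a {}b /orP[/andP[pa /t_bound] | /and3P[_ -> ->]] //; lia.
- move=> {}a {}b c /orP[/andP[pa h1] | /and3P[ap ab bpq]] /orP[/andP[pb h2] | /and3P[bp bc cpq]].
  + by rewrite pa (t_trans _ _ _ h1 h2).
  + by have := inverted_lt h1; lia.
  + have := inverted_lt h2; have := inverted_bound h2 => h3 h4.
    by rewrite ap (ltn_trans ab (_ : b < c)) ?orbT //; lia.
  + by rewrite ap cpq (ltn_trans ab bc) orbT.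
- move=> {}a {}b c ab bc /orP[/andP[pa h] | /and3P[ap ac cpq]].
  + have [ab' bc'] : a - p < b - p /\ b - p < c - p by lia.
    by case/orP: (t_cotrans _ _ _ ab' bc' h) => ->; rewrite pa (leq_trans pa (ltnW ab)) ?orbT.
  + case: (ltnP b p) => bp; first by rewrite bc cpq !orbT.
    by rewrite ap ab (ltn_trans bc cpq) ?orbT.
Qed.

Lemma right_part_right_top t : right_part (right_top t) = t.
Proof.
apply: inverted_inj => a b; rewrite inverted_right_part inverted_right_top leq_addr /= !addKn.
by rewrite ltnNge leq_addr /= orbF.
Qed.

Lemma right_part_adjoint w t : weak_le (right_part w) t = weak_le w (right_top t).
Proof.
apply/idP/idP => le.
- apply/weak_leP => a b h; rewrite inverted_right_top.
  case: (ltnP a p) => ap /=; first by rewrite (inverted_lt h) (inverted_bound h) ?bp ?orbT.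
  rewrite orbF (weak_le_inverted le) // inverted_right_part !subnKC //.
  exact: leq_trans ap (ltnW (inverted_lt h)).
- by rewrite -(right_part_right_top t) right_part_mono.
Qed.

Lemma pcat1l_adjoint t w : weak_le (pcat 1 t) w = weak_le t (right_part w).
Proof.
apply/idP/idP => le; last first.
  apply/weak_leP => a b; rewrite inverted_pcat inverted1.
  case: ifP => // bp /andP[pa h]; have pb : p <= b by have := inverted_lt h; lia.
  by have := weak_le_inverted le h; rewrite inverted_right_part !subnKC.
by rewrite -(right_part_pcat 1 t) right_part_mono.
Qed.

Lemma left_part_join w x j : is_join w x j -> is_join (left_part w) (left_part x) (left_part j).
Proof. exact: is_join_upper_adjoint left_part_adjoint _ _ _. Qed.

Lemma left_part_meet w x m : is_meet w x m -> is_meet (left_part w) (left_part x) (left_part m).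
Proof. exact: is_meet_lower_adjoint pcat1_adjoint _ _ _. Qed.

Lemma right_part_join w x j : is_join w x j -> is_join (right_part w) (right_part x) (right_part j).
Proof. exact: is_join_upper_adjoint right_part_adjoint _ _ _. Qed.

Lemma right_part_meet w x m : is_meet w x m -> is_meet (right_part w) (right_part x) (right_part m).
Proof. exact: is_meet_lower_adjoint pcat1l_adjoint _ _ _. Qed.

End Parts.

Section PcatLattice.
Variables p q : nat.
Implicit Types (s z j : 'S_p) (t : 'S_q).

Lemma pcat_monol s z t : weak_le s z -> weak_le (pcat s t) (pcat z t).
Proof.
move=> le; apply/weak_leP => a b; rewrite !inverted_pcat.
by case: ifP => // _; apply: weak_le_inverted.
Qed.

Lemma pcat_monor s (t t' : 'S_q) : weak_le t t' -> weak_le (pcat s t) (pcat s t').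
Proof.
move=> le; apply/weak_leP => a b; rewrite !inverted_pcat.
by case: ifP => // _ /andP[-> /(weak_le_inverted le)].
Qed.

Lemma pcat_join_blocks s t : is_join (pcat s 1) (pcat 1 t) (pcat s t).
Proof.
split; [exact/pcat_monor/weak_le1 | exact/pcat_monol/weak_le1 |].
move=> W h1 h2; apply/weak_leP => a b; rewrite inverted_pcat; case: ifP => bp h.
- by apply: (weak_le_inverted h1); rewrite inverted_pcat bp.
- by apply: (weak_le_inverted h2); rewrite inverted_pcat bp.
Qed.

Lemma pcatl_join t s z j : is_join s z j -> is_join (pcat s t) (pcat z t) (pcat j t).
Proof.
case=> sj zj least; split; try exact: pcat_monol.
move=> W h1 h2.
have /(weak_le_inverted) jW : weak_le j (left_part W).
  by apply: least; [move: h1 | move: h2] => /left_part_mono; rewrite left_part_pcat.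
apply/weak_leP => a b; rewrite inverted_pcat; case: ifP => bp h.
- by move: (jW _ _ h); rewrite inverted_left_part bp.
- by apply: (weak_le_inverted h1); rewrite inverted_pcat bp.
Qed.

Lemma pcatl_meet t s z m : is_meet s z m -> is_meet (pcat s t) (pcat z t) (pcat m t).
Proof.
case=> ms mz great; split; try exact: pcat_monol.
move=> W h1 h2.
have /(weak_le_inverted) Wm : weak_le (left_part W) m.
  by apply: great; [move: h1 | move: h2] => /left_part_mono; rewrite left_part_pcat.
apply/weak_leP => a b h; rewrite inverted_pcat; case: ifP => bp.
- by apply: Wm; rewrite inverted_left_part bp.
- by move: (weak_le_inverted h1 h); rewrite inverted_pcat bp.
Qed.

Lemma pcatr_join s (t u j : 'S_q) : is_join t u j -> is_join (pcat s t) (pcat s u) (pcat s j).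
Proof.
case=> tj uj least; split; try exact: pcat_monor.
move=> W h1 h2.
have /(weak_le_inverted) jW : weak_le j (right_part W).
  by apply: least; [move: h1 | move: h2] => /right_part_mono; rewrite right_part_pcat.
apply/weak_leP => a b; rewrite inverted_pcat; case: ifP => bp.
- by move=> h; apply: (weak_le_inverted h1); rewrite inverted_pcat bp.
- move=> /andP[pa h]; have pb : p <= b by have := inverted_lt h; lia.
  by move: (jW _ _ h); rewrite inverted_right_part !subnKC.
Qed.

Lemma pcatr_meet s (t u m : 'S_q) : is_meet t u m -> is_meet (pcat s t) (pcat s u) (pcat s m).
Proof.
case=> mt mu great; split; try exact: pcat_monor.
move=> W h1 h2.
have /(weak_le_inverted) Wm : weak_le (right_part W) m.
  by apply: great; [move: h1 | move: h2] => /right_part_mono; rewrite right_part_pcat.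
apply/weak_leP => a b h; rewrite inverted_pcat; case: ifP => bp.
- by move: (weak_le_inverted h1 h); rewrite inverted_pcat bp.
- have := weak_le_inverted h1 h; rewrite inverted_pcat bp => /andP[pa _]; rewrite pa /=.
  apply: Wm; rewrite inverted_right_part !subnKC //.
  exact: leq_trans pa (ltnW (inverted_lt h)).
Qed.

End PcatLattice.

Section Join.
Variables (n : nat) (u w : 'S_n).

Let step a b := inverted u a b || inverted w a b.

Definition join_rel a b := `[< clos_trans nat step a b >].

Let step_bound a b : step a b -> (a < b) && (b < n).
Proof. by case/orP => h; rewrite (inverted_lt h) (inverted_bound h). Qed.

Let closure_bound a b : clos_trans nat step a b -> (a < b) && (b < n).
Proof.
elim => [x y /step_bound //| x y z _ /andP[h1 h2] _ /andP[h3 h4]].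
by rewrite h4 (ltn_trans h1 h3).
Qed.

Let step_cotrans a b c : a < b -> b < c -> step a c -> step a b || step b c.
Proof.
have [_ _ u_cotrans] := inversion_rel_inverted u.
have [_ _ w_cotrans] := inversion_rel_inverted w.
move=> ab bc /orP[/(u_cotrans _ _ _ ab bc) | /(w_cotrans _ _ _ ab bc)] /orP[] h;
  by rewrite /step h ?orbT.
Qed.

Let closure_cotrans a c : clos_trans nat step a c -> forall b, a < b -> b < c ->
  clos_trans nat step a b \/ clos_trans nat step b c.
Proof.
move=> h0; elim: (clos_trans_t1n _ _ _ _ h0) => {h0 a c} [x y h | x y z h hyz IH] b xb bc.
  by case/orP: (step_cotrans xb bc h) => h'; [left | right]; apply: t_step.
case: (ltngtP b y) => yb; last by subst b; left; apply: t_step.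
- case/orP: (step_cotrans xb yb h) => h'; first by left; apply: t_step.
  by right; apply: t_trans (t_step _ _ _ _ h') (clos_t1n_trans _ _ _ _ hyz).
- case: (IH b yb bc) => h'; last by right.
  by left; apply: t_trans (t_step _ _ _ _ h) h'.
Qed.

Lemma inversion_rel_join_rel : inversion_rel n join_rel.
Proof.
split.
- by move=> a b /asboolP /closure_bound.
- by move=> a b c /asboolP h1 /asboolP h2; apply/asboolP; apply: t_trans h1 h2.
- move=> a b c ab bc /asboolP h.
  by case: (closure_cotrans h ab bc) => h'; apply/orP; [left | right]; apply/asboolP.
Qed.

Lemma join_exists : exists j, is_join u w j.
Proof.
have Ij := inverted_perm_of_rel inversion_rel_join_rel.
exists (perm_of_rel n join_rel); split.
- by apply/weak_leP => a b h; rewrite Ij; apply/asboolP/t_step; rewrite /step h.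
- by apply/weak_leP => a b h; rewrite Ij; apply/asboolP/t_step; rewrite /step h orbT.
- move=> z lu lw; apply/weak_leP => a b; rewrite Ij => /asboolP.
  have [_ z_trans _] := inversion_rel_inverted z.
  elim => [x y | x y t _ h1 _ h2]; last exact: z_trans h1 h2.
  by case/orP => h; [apply: (weak_le_inverted lu) | apply: (weak_le_inverted lw)].
Qed.

End Join.

Lemma lattice_congruence_pullback m n (f : 'S_m -> 'S_n) (R : 'S_n -> 'S_n -> Prop) :
  lattice_congruence R ->
  (forall x y j, is_join x y j -> is_join (f x) (f y) (f j)) ->
  (forall x y j, is_meet x y j -> is_meet (f x) (f y) (f j)) ->
  lattice_congruence (fun x y => R (f x) (f y)).
Proof.
case=> Rr Rs Rt Rj Rm fj fm; split.
- by move=> x; apply: Rr.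
- by move=> x y; apply: Rs.
- by move=> x y z; apply: Rt.
- by move=> x y z jx jy h /fj h1 /fj h2; apply: Rj h h1 h2.
- by move=> x y z jx jy h /fm h1 /fm h2; apply: Rm h h1 h2.
Qed.

Section TrTheory.
Variable C : forall k, {set 'S_k}.

Lemma Tr_congruence n : lattice_congruence (@Tr C n).
Proof.
split.
- by move=> x R [Rr _ _ _ _] _.
- by move=> x y H R HR c; case: (HR) => _ Rs _ _ _; apply: Rs; apply: H.
- by move=> x y z H1 H2 R HR c; case: (HR) => _ _ Rt _ _; apply: Rt (H1 R HR c) (H2 R HR c).
- by move=> x y z jx jy H j1 j2 R HR c; case: (HR) => _ _ _ Rj _; apply: Rj (H R HR c) j1 j2.
- by move=> x y z mx my H m1 m2 R HR c; case: (HR) => _ _ _ _ Rm; apply: Rm (H R HR c) m1 m2.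
Qed.

Lemma Tr_refl n (x : 'S_n) : Tr C x x.
Proof. by case: (Tr_congruence n). Qed.

Lemma Tr_contracts n (g0 g : 'S_n) : join_irreducible g ->
  (exists k (c : 'S_k), c \in C k /\ translate_of g c) -> covers g0 g -> Tr C g0 g.
Proof.
move=> ji trg g0g R _ /(_ g ji trg) [g1 [g1g Rg1]].
by rewrite (covers_uniq ji g0g g1g).
Qed.

Hypothesis C_ji : forall k (c : 'S_k), c \in C k -> untranslated c && join_irreducible c.

Lemma Tr_del_translate n k (c : 'S_k) (h0 h : 'S_n) a : c \in C k -> a + k <= n ->
  translated_at h a c -> inverted h0 =2 del_pair (inverted h) a (a + k.-1) -> Tr C h0 h.
Proof.
move=> cC le tr E; have /andP[ut ji] := C_ji cC.
have [d _] := translated_descent ut ji le tr.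
have trh : translate_of h c by apply/translate_ofP; exists a.
apply: Tr_contracts (covers_del_pair (andP d).1 E); last by exists k, c.
exact/(translate_of_ji trh).
Qed.

Lemma translate_lower_cover n k (c : 'S_k) (g0 g : 'S_n) : c \in C k ->
  translate_of g c -> covers g0 g -> exists2 a, a + k <= n &
    translated_at g a c /\ inverted g0 =2 del_pair (inverted g) a (a + k.-1).
Proof.
move=> cC /translate_ofP [a le tr] /coversP [x [y [d ->]]].
have /andP[ut ji] := C_ji cC; have [_ U] := translated_descent ut ji le tr.
case: (U _ _ d) => ? ?; subst x y.
by exists a => //; split => //; apply: inverted_del_descent.
Qed.

Lemma Tr_pullback m n (f : 'S_m -> 'S_n) :
  (forall x y j, is_join x y j -> is_join (f x) (f y) (f j)) ->
  (forall x y j, is_meet x y j -> is_meet (f x) (f y) (f j)) ->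
  (forall k (c : 'S_k) (g0 g : 'S_m) a, c \in C k -> a + k <= m -> translated_at g a c ->
     inverted g0 =2 del_pair (inverted g) a (a + k.-1) -> Tr C (f g0) (f g)) ->
  forall x y, Tr C x y -> Tr C (f x) (f y).
Proof.
move=> fj fm fcov x y xy; apply: (xy (fun x y => Tr C (f x) (f y))).
  exact: lattice_congruence_pullback (Tr_congruence n) fj fm.
move=> g ji [k [c [cC trg]]].
have [g0 g0g] := join_irreducible_covers ji.
have [a le [tr E]] := translate_lower_cover cC trg g0g.
by exists g0; split => //; apply: fcov tr E.
Qed.

Section Blocks.
Variables p q : nat.

Lemma Tr_left_part (x y : 'S_(p + q)) : Tr C x y -> Tr C (left_part x) (left_part y).
Proof.
apply: Tr_pullback; [exact: left_part_join | exact: left_part_meet |].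
move=> k c g0 g a cC le tr E.
case: (leqP (a + k) p) => akp.
- apply: (Tr_del_translate cC akp) => s t.
    rewrite inverted_left_part; case: (ltnP t p) => tp; first exact: tr.
    by apply/esym/negbTE/negP => /andP[_ /inverted_bound]; lia.
  by rewrite /del_pair !inverted_left_part E /del_pair andbA.
- have -> : left_part g0 = left_part g; last exact: Tr_refl.
  apply: inverted_inj => s t; rewrite !inverted_left_part E /del_pair.
  by case: (ltnP t p) => //= tp; rewrite (_ : t != a + k.-1) ?orbT ?andbT //; apply/eqP; lia.
Qed.

Lemma Tr_right_part (x y : 'S_(p + q)) : Tr C x y -> Tr C (right_part x) (right_part y).
Proof.
apply: Tr_pullback; [exact: right_part_join | exact: right_part_meet |].
move=> k c g0 g a cC le tr E.
case: (leqP p a) => pa.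
- apply: (@Tr_del_translate _ _ _ _ _ (a - p) cC); first by lia.
    move=> s t; rewrite inverted_right_part tr.
    have -> : (a <= p + s) = (a - p <= s) by apply/idP/idP; lia.
    have -> : p + s - a = s - (a - p) by lia.
    by have -> : p + t - a = t - (a - p) by lia.
  move=> s t; rewrite /del_pair !inverted_right_part E /del_pair.
  by congr (_ && (~~ _ || ~~ _)); apply/eqP/eqP; lia.
- have -> : right_part g0 = right_part g; last exact: Tr_refl.
  apply: inverted_inj => s t; rewrite !inverted_right_part E /del_pair.
  by rewrite (_ : p + s != a) ?andbT //; apply/eqP; lia.
Qed.

Lemma Tr_pcatl (u u' : 'S_p) (v : 'S_q) : Tr C u u' -> Tr C (pcat u v) (pcat u' v).
Proof.
apply: (@Tr_pullback _ _ (fun s => pcat s v)); [exact: pcatl_join | exact: pcatl_meet |].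
move=> k c g0 g a cC le tr E.
have [_ _ _ Tr_join _] := Tr_congruence (p + q).
apply: Tr_join (pcat_join_blocks g0 v) (pcat_join_blocks g v).
apply: (Tr_del_translate cC (leq_trans le (leq_addr _ _))).
  move=> s t; rewrite inverted_pcat inverted1 andbF; case: ifP => tp; first exact: tr.
  by apply/esym/negbTE/negP => /andP[_ /inverted_bound]; lia.
by move=> s t; rewrite /del_pair !inverted_pcat inverted1 !andbF E; case: ifP.
Qed.

Lemma Tr_pcatr (u : 'S_p) (v v' : 'S_q) : Tr C v v' -> Tr C (pcat u v) (pcat u v').
Proof.
apply: (@Tr_pullback _ _ (fun t => pcat u t)); [exact: pcatr_join | exact: pcatr_meet |].
move=> k c g0 g a cC le tr E.
have [_ _ _ Tr_join _] := Tr_congruence (p + q).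
apply: Tr_join (is_join_sym (pcat_join_blocks u g0)) (is_join_sym (pcat_join_blocks u g)).
apply: (@Tr_del_translate _ _ _ _ _ (p + a) cC); first by lia.
  move=> s t; rewrite inverted_pcat inverted1 tr -!subnDA.
  case: ifP => tp; first by apply/esym/negbTE/negP => /andP[ps /inverted_lt]; lia.
  by rewrite andbA; congr (_ && _); apply/idP/idP => [/andP[]|h]; [lia | apply/andP; split; lia].
move=> s t; rewrite /del_pair !inverted_pcat inverted1 E /del_pair.
case: ifP => //= tp; case: (boolP (p <= s)) => //= ps.
by congr (_ && (~~ _ || ~~ _)); apply/eqP/eqP; lia.
Qed.

End Blocks.

Lemma Tr_translational : translational (fun n => @Tr C n).
Proof.
move=> p q u u' v v'; split.
- by move=> H; split; [move: (Tr_left_part H) | move: (Tr_right_part H)];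
    rewrite ?left_part_pcat ?right_part_pcat.
- case=> Hu Hv; have [_ _ Tr_trans _ _] := Tr_congruence (p + q).
  exact: Tr_trans (Tr_pcatl v Hu) (Tr_pcatr u' Hv).
Qed.

End TrTheory.

Section DescentJI.
Variables (n : nat) (b : 'S_n) (x y : nat).
Hypothesis d : descent b x y.

Let xy_inv : inverted b x y. Proof. by case/andP: d. Qed.
Let pos_xy : pos b x = (pos b y).+1. Proof. by case/andP: d => _ /eqP. Qed.
Let lt_xy : x < y. Proof. exact: inverted_lt xy_inv. Qed.
Let lt_yn : y < n. Proof. exact: inverted_bound xy_inv. Qed.

(* The join-irreducible labelling the cover [del_descent b x y <. b]: the
   inversions of b among the values in [x, y] placed between y and x. *)
Definition descent_ji_rel s t :=
  [&& s < t, x <= s, t <= y, pos b t <= pos b y & pos b x <= pos b s].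

Definition descent_ji := perm_of_rel n descent_ji_rel.

Lemma descent_ji_rel_ends : descent_ji_rel x y.
Proof. by rewrite /descent_ji_rel lt_xy !leqnn. Qed.

Lemma inversion_rel_descent_ji_rel : inversion_rel n descent_ji_rel.
Proof.
split.
- by move=> s t /and5P[st xs ty _ _]; rewrite st /=; lia.
- move=> s m t /and5P[sm xs my pm ps] /and5P[mt xm ty pt pm'].
  by rewrite /descent_ji_rel (ltn_trans sm mt) xs ty pt ps.
- move=> s m t sm mt /and5P[st xs ty pt ps].
  case: (leqP (pos b m) (pos b y)) => pm.
  + by apply/orP; left; rewrite /descent_ji_rel sm xs pm ps andbT; lia.
  + by apply/orP; right; rewrite /descent_ji_rel mt ty pt /=; apply/andP; split; lia.
Qed.

Lemma inverted_descent_ji : inverted descent_ji =2 descent_ji_rel.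
Proof. exact: inverted_perm_of_rel inversion_rel_descent_ji_rel. Qed.

Lemma descent_ji_le : weak_le descent_ji b.
Proof.
apply/weak_leP => s t; rewrite inverted_descent_ji => /and5P[st _ ty pt ps].
by rewrite /inverted st /=; have := lt_yn; have := pos_xy; lia.
Qed.

Lemma descent_ji_descent_uniq s t : descent descent_ji s t -> s = x /\ t = y.
Proof.
move=> dst; have [_ _ cotrans] := inversion_rel_del_descent dst.
have := (andP dst).1; rewrite inverted_descent_ji => /and5P[st xs ty pt ps].
have pxy := pos_xy.
case: (eqVneq s x) => [sx | nsx].
- subst s; split => //; case: (eqVneq t y) => [//|nty]; exfalso.
  have ty' : t < y by lia.
  have := cotrans _ _ _ st ty'; rewrite /del_pair !inverted_descent_ji.
  rewrite descent_ji_rel_ends eqxx eq_sym nty => /(_ isT)/orP[/andP[_]|/andP[/and5P[] _]].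
    by rewrite !eqxx.
  by lia.
- have xs' : x < s by lia.
  have xt : descent_ji_rel x t by rewrite /descent_ji_rel (ltn_trans xs' st) leqnn ty pt leqnn.
  have := cotrans _ _ _ xs' st; rewrite /del_pair !inverted_descent_ji xt eq_sym nsx.
  by move=> /(_ isT)/orP[/andP[/and5P[] _]|/andP[_]]; [lia | rewrite !eqxx].
Qed.

Lemma descent_descent_ji : descent descent_ji x y.
Proof.
have ne : 1 != descent_ji.
  apply/eqP => /(congr1 (fun w => inverted w x y)).
  by rewrite inverted1 inverted_descent_ji descent_ji_rel_ends.
have [s [t [dst _]]] := exists_descent (weak_le1 _) ne.
by case: (descent_ji_descent_uniq dst) => <- <-.
Qed.

Lemma join_irreducible_descent_ji : join_irreducible descent_ji.
Proof.
apply/join_irreducibleP; exists x, y; split; first exact: descent_descent_ji.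
exact: descent_ji_descent_uniq.
Qed.

Lemma meet_del_descent_ji :
  is_meet (del_descent b x y) descent_ji (del_descent descent_ji x y).
Proof.
have Ib := inverted_del_descent d; have Ij := inverted_del_descent descent_descent_ji.
split.
- apply/weak_leP => s t; rewrite Ij Ib /del_pair inverted_descent_ji => /andP[h ->].
  by rewrite andbT (weak_le_inverted descent_ji_le) // inverted_descent_ji.
- by apply/weak_leP => s t; rewrite Ij => /andP[].
- move=> z h1 h2; apply/weak_leP => s t h.
  move: (weak_le_inverted h1 h) (weak_le_inverted h2 h).
  by rewrite Ib Ij /del_pair => /andP[_ ->] ->.
Qed.

Lemma join_descent_ji_del : is_join descent_ji (del_descent b x y) b.
Proof.
have Ib := inverted_del_descent d.
split; first exact: descent_ji_le.
- by apply/weak_leP => s t; rewrite Ib => /andP[].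
- move=> z h1 h2; apply/weak_leP => s t h.
  case: (boolP ((s != x) || (t != y))) => e.
    by apply: (weak_le_inverted h2); rewrite Ib /del_pair h e.
  move: e; rewrite negb_or !negbK => /andP[/eqP -> /eqP ->].
  by apply: (weak_le_inverted h1); rewrite inverted_descent_ji descent_ji_rel_ends.
Qed.

Definition descent_core : 'S_(y.+1 - x) :=
  perm_of_rel (y.+1 - x) (fun s t => descent_ji_rel (s + x) (t + x)).

Lemma inverted_descent_core : inverted descent_core =2 (fun s t => descent_ji_rel (s + x) (t + x)).
Proof.
apply: inverted_perm_of_rel.
have [_ Itrans Icotrans] := inversion_rel_descent_ji_rel; split.
- by move=> s t /and5P[st xs ty _ _]; apply/andP; split; lia.
- by move=> s m t; apply: Itrans.
- by move=> s m t sm mt; apply: Icotrans; lia.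
Qed.

Lemma translate_descent_core : translate_of descent_ji descent_core.
Proof.
apply/translate_ofP; exists x; first by have := lt_yn; lia.
move=> s t; rewrite inverted_descent_ji inverted_descent_core.
case: (leqP x s) => xs /=; last by apply/negbTE; apply/negP => /and5P[]; lia.
case: (leqP x t) => xt; first by rewrite !subnK.
by rewrite [LHS](_ : _ = false) ?[RHS](_ : _ = false) //; apply/negbTE/negP => /and5P[]; lia.
Qed.

Lemma untranslated_descent_core : untranslated descent_core.
Proof.
apply: untranslated_of_ends; rewrite inverted_descent_core add0n.
by rewrite (_ : (y.+1 - x).-1 + x = y) ?descent_ji_rel_ends //; have := lt_xy; lia.
Qed.

Lemma join_irreducible_descent_core : join_irreducible descent_core.
Proof.
apply/(translate_of_ji translate_descent_core); exact: join_irreducible_descent_ji.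
Qed.

End DescentJI.

Section Forward.
Unset Implicit Arguments.
Variable Theta : forall n, 'S_n -> 'S_n -> Prop.
Set Implicit Arguments.
Hypothesis Theta_cong : forall n, lattice_congruence (Theta n).
Hypothesis Theta_tr : translational Theta.

Lemma Theta_refl n (x : 'S_n) : Theta n x x. Proof. by case: (Theta_cong n). Qed.

Lemma Theta_cast m n (E : m = n) (x y : 'S_m) :
  Theta n (cast_perm E x) (cast_perm E y) <-> Theta m x y.
Proof. by case: n / E; rewrite !cast_perm_id. Qed.

Lemma Theta_pad a b k (c0 c : 'S_k) : Theta _ (pad a b c0) (pad a b c) <-> Theta k c0 c.
Proof.
split; first by move/Theta_tr => [/Theta_tr [_ h] _].
move=> h; apply/Theta_tr; split; last exact: Theta_refl.
by apply/Theta_tr; split; [apply: Theta_refl | exact: h].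
Qed.

Lemma translate_cover_Theta n k (g : 'S_n) (c0 c : 'S_k) : translate_of g c -> covers c0 c ->
  exists2 g0, covers g0 g & (Theta n g0 g <-> Theta k c0 c).
Proof.
case=> a [b [E ->]] c0c; exists (cast_perm E (pad a b c0)).
  by rewrite covers_cast; apply: covers_pad.
by rewrite Theta_cast Theta_pad.
Qed.

(* The set C of the theorem, for a translational Theta. *)
Definition contracted_core k : {set 'S_k} :=
  [set c | untranslated c && join_irreducible c && `[< contracts (Theta k) c >]].

Lemma Tr_sub_Theta n (x y : 'S_n) : Tr contracted_core x y -> Theta n x y.
Proof.
move=> xy; apply: xy (Theta_cong n) _ => g ji [k [c [cC trg]]].
move: cC; rewrite inE => /andP[_ /asboolP [c0 [c0c Tc0c]]].
have [g0 g0g Tg0g] := translate_cover_Theta trg c0c.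
by exists g0; split => //; apply/Tg0g.
Qed.

Section Below.
Variables (n : nat) (R : 'S_n -> 'S_n -> Prop).
Hypothesis R_cong : lattice_congruence R.
Hypothesis R_contr : forall g : 'S_n, join_irreducible g ->
  (exists k (c : 'S_k), c \in contracted_core k /\ translate_of g c) -> contracts R g.

Lemma R_del_descent (b : 'S_n) x y :
  descent b x y -> Theta n (del_descent b x y) b -> R (del_descent b x y) b.
Proof.
move=> d Tab; set j := descent_ji b x y; set j0 := del_descent j x y.
have dj := descent_descent_ji d; have jij := join_irreducible_descent_ji d.
have j0j := covers_del_descent dj.
have [_ _ _ _ Theta_meet] := Theta_cong n.
have Tj0j : Theta n j0 j.
  exact: Theta_meet Tab (meet_del_descent_ji d) (is_meet_sym (is_meet_le (descent_ji_le d))).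
have core_in : descent_core b x y \in contracted_core _.
  rewrite inE untranslated_descent_core // join_irreducible_descent_core //=.
  have [c0 c0c] := join_irreducible_covers (join_irreducible_descent_core d).
  have [g0 g0j Tg0j] := translate_cover_Theta (translate_descent_core d) c0c.
  apply/asboolP; exists c0; split => //; apply/Tg0j.
  by rewrite (covers_uniq jij g0j j0j).
have [j1 [j1j Rj1j]] : contracts R j.
  apply: R_contr jij _; exists (y.+1 - x), (descent_core b x y).
  by split; last exact: translate_descent_core.
have [_ _ _ R_join _] := R_cong; have [j0a _ _] := meet_del_descent_ji d.
apply: R_join (is_join_le j0a) (join_descent_ji_del d).
by rewrite -(covers_uniq jij j1j j0j).
Qed.

Lemma R_below (u w : 'S_n) : weak_le u w -> Theta n u w -> R u w.
Proof.
have [N] := ubnP #|inv_set w|; elim: N u w => // N IH u w ltN uw Tuw.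
have [_ _ R_trans _ _] := R_cong; have [_ T_sym T_trans _ T_meet] := Theta_cong n.
case: (eqVneq u w) => [-> | ne]; first by case: R_cong.
have [x [y [d nu]]] := exists_descent uw ne.
set w' := del_descent w x y; have Iw' := inverted_del_descent d.
have uw' : weak_le u w'.
  apply/weak_leP => s t h; rewrite Iw' /del_pair (weak_le_inverted uw h) /=.
  apply: contraNT nu; rewrite negb_or !negbK => /andP[/eqP sx /eqP ty].
  by rewrite -sx -ty.
have w'w : weak_le w' w by apply/weak_leP => s t; rewrite Iw' => /andP[].
have Tuw' : Theta n u w' := T_meet _ _ _ _ _ Tuw (is_meet_le uw') (is_meet_sym (is_meet_le w'w)).
have card : #|inv_set w'| < #|inv_set w|.
  apply: proper_card; apply/properP; split; first exact: w'w.
  have yn := inverted_bound (andP d).1; have xn := ltn_trans (inverted_lt (andP d).1) yn.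
  exists (Ordinal xn, Ordinal yn); rewrite !in_inv_set //= ?(andP d).1 //.
  by rewrite Iw' /del_pair !eqxx andbF.
have ltN' : #|inv_set w'| < N by lia.
apply: R_trans (IH _ _ ltN' uw' Tuw') (R_del_descent d _).
exact: T_trans (T_sym _ _ Tuw') Tuw.
Qed.

End Below.

Lemma Theta_sub_Tr n (x y : 'S_n) : Theta n x y -> Tr contracted_core x y.
Proof.
move=> Txy R R_cong R_contr.
have [j xyj] := join_exists x y; have [xj yj _] := xyj.
have [_ T_sym _ T_join _] := Theta_cong n; have [_ R_sym R_trans _ _] := R_cong.
have Txj : Theta n x j := T_join _ _ _ _ _ Txy (is_join_le (weak_le_refl x)) (is_join_sym xyj).
have Tjy : Theta n j y := T_join _ _ _ _ _ Txy xyj (is_join_le (weak_le_refl y)).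
have Rxj := R_below R_cong R_contr xj Txj.
have Ryj := R_below R_cong R_contr yj (T_sym _ _ Tjy).
exact: R_trans Rxj (R_sym _ _ Ryj).
Qed.

End Forward.

Theorem proposition7p1 (Theta : forall n, 'S_n -> 'S_n -> Prop) :
  (forall n, lattice_congruence (Theta n)) ->
  (translational Theta <->
   exists C : forall k, {set 'S_k},
     (forall k (c : 'S_k), c \in C k -> untranslated c && join_irreducible c) /\
     (forall n (x y : 'S_n), Theta n x y <-> Tr C x y)).
Proof.
move=> Theta_cong; split.
- move=> Theta_tr; exists (contracted_core Theta); split.
    by move=> k c; rewrite inE => /andP[/andP[-> ->] _].
  move=> n x y; split; first exact: Theta_sub_Tr.
  exact: Tr_sub_Theta.
- case=> C [C_ji Theta_Tr] p q u u' v v'.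
  have tr := Tr_translational C_ji u u' v v'.
  split => [/Theta_Tr/tr [] /Theta_Tr ? /Theta_Tr ? // | [/Theta_Tr ? /Theta_Tr ?]].
  by apply/Theta_Tr/tr.
Qed.
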